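(* Let $p$ be an odd prime, $V_p=\{2^{n-1}p^m:n,m\in\mathbb{N}\}$, and let $\mathcal{E}_p$ be the set of two-element subsets $E\subseteq V_p$ with $A_E=\{2,p\}$. (1) If $p=3$, then $\mathcal{E}_3$ consists exactly of the doubletons $\{2^{a-1}3^b,2^{a-1}3^{b+1}\}$, $\{2^{a-1}3^b,2^{a-1}3^{b+2}\}$, $\{2^{a-1}3^b,2^{a}3^{b}\}$, $\{2^{a-1}3^b,2^{a+1}3^{b}\}$, $\{2^{a-1}3^{b+1},2^{a+1}3^b\}$, $\{2^{a}3^{b},2^{a-1}3^{b+1}\}$, $\{2^{a+2}3^b,2^{a-1}3^{b+2}\}$ for $a,b\in\mathbb{N}$. (2) If $p=2^m+1>3$ is a Fermat prime, then $\mathcal{E}_p=\big\{\{2^{a-1}p^b,2^{a-1}p^{b+1}\},\{2^{a-1}p^b,2^{a}p^b\},\{2^{m+a-1}p^{b},2^{a-1}p^{b+1}\}:a,b\in\mathbb{N}\big\}$. (3) If $p=2^m-1>3$ is a Mersenne prime, then $\mathcal{E}_p=\big\{\{2^{a-1}p^b,2^{a}p^b\},\{2^{a-1}p^b,2^{m+a-1}p^b\},\{2^{a-1}p^{b+1},2^{m+a-1}p^b\}:a,b\in\mathbb{N}\big\}$. (4) If $p$ is neither a Fermat prime nor a Mersenne prime, then $\mathcal{E}_p=\big\{\{2^ap^b,2^{a-1}p^b\}:a,b\in\mathbb{N}\big\}$.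
   Context: $\mathbb{N}=\{1,2,\dots\}$, $\Pi$ the set of primes. For a nonempty finite $E\subseteq\mathbb{N}$, $A_E=\{q\in\Pi:\exists k\in\mathbb{N}\ (E\subseteq q\mathbb{Z}\cup(k+q\mathbb{Z}))\}$. A prime $p$ is a Fermat prime if $p=2^n+1$ for some $n\in\mathbb{N}$, and a Mersenne prime if $p=2^n-1$ for some $n\in\mathbb{N}$. *)

From mathcomp Require Import all_boot.
Set Implicit Arguments. Unset Strict Implicit. Unset Printing Implicit Defensive.

(* Naturals are 1,2,...: all exponent parameters below carry an explicit 0 < _ . *)

Definition in_A_E (E : seq nat) (q : nat) : Prop :=
  prime q /\ exists k : nat, 0 < k /\
    forall x, x \in E -> (q %| x) \/ (x = k %[mod q]).

Definition in_V (p x : nat) : Prop :=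
  exists n m : nat, 0 < n /\ 0 < m /\ x = 2 ^ (n - 1) * p ^ m.

Definition in_Ep (p x y : nat) : Prop :=
  x <> y /\ in_V p x /\ in_V p y /\
  (forall q, in_A_E [:: x; y] q <-> (q = 2 \/ q = p)).

Definition same2 (x y u v : nat) : Prop :=
  (x = u /\ y = v) \/ (x = v /\ y = u).

Definition fermat_prime (p : nat) : Prop :=
  prime p /\ exists n, 0 < n /\ p = 2 ^ n + 1.

Definition mersenne_prime (p : nat) : Prop :=
  prime p /\ exists n, 0 < n /\ p = 2 ^ n - 1.

From mathcomp Require Import all_boot zify.

(* A prime q outside {2, p} divides no element of V_p, so it belongs to A_{x,y} exactly
   when q divides x - y: {x, y} lies in E_p iff |x - y| is a {2,p}-number.  Write
   {x, y} = g {u, w} with g in V_p and u < w coprime.  Unless u = 1, both 2 and p divide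
   u w, and then any prime factor of w - u would divide both u and w, so w = u + 1.  What
   is left are the equations 2^s + 1 = p^t and p^t + 1 = 2^s, which force t = 1 except for
   3^2 = 2^3 + 1: for odd t, p^t = p modulo 2 (p +- 1) makes 2^s an odd multiple of
   p +- 1, and for even t one works modulo 4 or factors p^t - 1. *)

Set Implicit Arguments.
Unset Strict Implicit.
Unset Printing Implicit Defensive.

Lemma pow2_add2 a b : 2 ^ b = 2 ^ a + 2 -> a = 1.
Proof.
move=> e; have lt_ab : a < b by rewrite -(ltn_exp2l _ _ (isT : 1 < 2)) e addn2.
have : 2 ^ a %| 2 ^ b - 2 ^ a by apply: dvdn_sub => //; apply: dvdn_exp2l; apply: ltnW.
rewrite e addKn; case: a {lt_ab} e => [|[|a]] // e.
  by case: b e => [|b]; rewrite ?expnS expn0 => e _; lia.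
by move/dvdn_leq => /(_ isT); rewrite -{2}(expn1 2) leq_exp2l.
Qed.

Lemma pow2_mod_double d s : 0 < d -> 2 ^ s = d %[mod d.*2] -> 2 ^ s = d.
Proof.
move=> d_gt0 e; set k := 2 ^ s %/ d.*2.
have {}e : 2 ^ s = d * (k.*2).+1.
  rewrite {1}(divn_eq (2 ^ s) d.*2) e modn_small -/k; last lia.
  by rewrite -!muln2; nia.
have : (k.*2).+1 %| 2 ^ s by rewrite e dvdn_mull.
case/(dvdn_pfactor _ _ (isT : prime 2)) => -[|i] _ ei; first by rewrite e ei expn0 muln1.
by move: ei => /(congr1 odd); rewrite expnS /= odd_double oddM.
Qed.

Lemma expn_mod_sqr_sub1 p t M : 0 < p -> M %| p ^ 2 - 1 -> p ^ t = p ^ odd t %[mod M].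
Proof.
move=> p_gt0 dvdM; have sqr1 : p ^ 2 = 1 %[mod M].
  by apply/eqP; rewrite eqn_mod_dvd // expn_gt0 p_gt0.
rewrite -{1}(odd_double_half t) expnD -mul2n expnM -modnMmr -modnXm sqr1.
by rewrite modnXm exp1n modnMmr muln1.
Qed.

Lemma odd_sqr_sub1_dvd p : odd p -> (p.+1).*2 %| p ^ 2 - 1 /\ (p.-1).*2 %| p ^ 2 - 1.
Proof.
move=> p_odd; rewrite -[p ^ 2]/(p * p) -(odd_double_half p) p_odd /=.
set k := p./2; split; apply/dvdnP; [exists k | exists k.+1]; rewrite -!muln2; nia.
Qed.

Lemma expn_add1_eq_pow2 p t s : 1 < p -> odd p -> p ^ t + 1 = 2 ^ s -> t <= 1.
Proof.
move=> p_gt1 p_odd e; have [dvdS _] := odd_sqr_sub1_dvd p_odd.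
have pt := expn_mod_sqr_sub1 t (ltnW p_gt1) dvdS.
have [t_odd|t_even] := boolP (odd t); rewrite ?t_odd ?(negbTE t_even) ?expn1 ?expn0 in pt.
  have : 2 ^ s = p.+1 %[mod p.+1.*2] by rewrite -e -modnDml pt modnDml addn1.
  move/pow2_mod_double => /(_ isT); rewrite -e addn1 => -[].
  by rewrite -{2}(expn1 p) => /(expnI p_gt1) ->.
have dvd4 : 2.*2 %| p.+1.*2 by rewrite -!muln2 dvdn_mul // dvdn2 /= negbK.
have : 2 ^ s = 2 %[mod 2.*2] by rewrite -e -modnDml -(modn_dvdm (p ^ t) dvd4) pt modn_dvdm.
move/pow2_mod_double => /(_ isT); rewrite -e addn1 => -[].
by rewrite -(expn0 p) => /(expnI p_gt1)->.
Qed.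

Lemma expn_eq_pow2_add1 p t s : 1 < p -> odd p -> p ^ t = 2 ^ s + 1 -> t = 1 \/ p = 3 /\ t = 2.
Proof.
move=> p_gt1 p_odd e; have [t_odd|t_even] := boolP (odd t).
  have [_ dvdP] := odd_sqr_sub1_dvd p_odd.
  have := expn_mod_sqr_sub1 t (ltnW p_gt1) dvdP; rewrite t_odd expn1 => pt.
  have : 2 ^ s = p.-1 %[mod p.-1.*2].
    by apply/eqP; rewrite -(eqn_modDr 1) -e addn1 prednK ?(ltnW p_gt1) ?pt.
  have pm1_gt0 : 0 < p.-1 by rewrite -subn1 subn_gt0.
  move/(pow2_mod_double pm1_gt0) => es; left.
  by apply: (expnI p_gt1); rewrite e es expn1 addn1 prednK // ltnW.
right; move: e; rewrite -(odd_double_half t) (negbTE t_even) add0n -muln2 expnM.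
move: (t./2) => w; move En : (p ^ w) => n e.
have n_gt0 : 0 < n by rewrite -En expn_gt0 ltnW.
have e2 : n.-1 * n.+1 = 2 ^ s by rewrite -subn1 -[n.+1]addn1 -subn_sqr e exp1n addnK.
have /(dvdn_pfactor _ _ (isT : prime 2)) [a _ ea] : n.-1 %| 2 ^ s by rewrite -e2 dvdn_mulr.
have /(dvdn_pfactor _ _ (isT : prime 2)) [b _ eb] : n.+1 %| 2 ^ s by rewrite -e2 dvdn_mull.
have a1 : a = 1 by apply: (@pow2_add2 a b); rewrite -ea -eb; lia.
have {}En : p ^ w = 3 by move: ea; rewrite En a1; lia.
have w_gt0 : 0 < w by case: w En.
have p3 : p = 3.
  have : p <= 3 by rewrite -En -{1}(expn1 p) leq_exp2l.
  by move: p_odd p_gt1; clear En; case: p => [|[|[|[]]]].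
by move: En; rewrite p3 -{2}(expn1 3) => /(expnI (isT : 1 < 3)) ->.
Qed.

Lemma fermat_mersenne_eq3 p a b : p = 2 ^ a + 1 -> p = 2 ^ b - 1 -> p = 3.
Proof.
move=> ea eb; have pow2b_gt0 : 0 < 2 ^ b by rewrite expn_gt0.
by rewrite ea (@pow2_add2 a b) //; lia.
Qed.

Definition two_p_smooth p n := forall q, prime q -> q %| n -> q = 2 \/ q = p.

Definition two_p_number p n := exists a b, n = 2 ^ a * p ^ b.

Lemma two_p_smoothP p n : prime p -> 0 < n -> two_p_smooth p n <-> two_p_number p n.
Proof.
move=> p_pr n_gt0; split=> [sm | [a [b ->]] q q_pr]; last first.
  rewrite Euclid_dvdM // !Euclid_dvdX // !dvdn_prime2 //.
  by case/orP=> /andP[/eqP-> _]; [left|right].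
have : p.-nat n`_(2^').
  apply/pnatP=> [|q q_pr q_dvd]; first exact: part_gt0.
  have := pnatP _ (part_gt0 _ _) (part_pnat 2^' n) q q_pr q_dvd.
  have [->|->] := sm q q_pr (dvdn_trans q_dvd (dvdn_part _ _)); by rewrite !inE.
case/p_natP=> b eb; exists (logn 2 n), b.
by rewrite -eb -p_part partnC.
Qed.

Lemma two_p_numberM p m n : two_p_number p m -> two_p_number p n -> two_p_number p (m * n).
Proof. by move=> [a [b ->]] [c [d ->]]; exists (a + c), (b + d); rewrite mulnACA -!expnD. Qed.

Lemma in_A_E_pair x y q : 0 < x -> 0 < y ->
  in_A_E [:: x; y] q <-> prime q /\ [\/ q %| x, q %| y | x = y %[mod q]].
Proof.
move=> x_gt0 y_gt0; split=> [[q_pr [k [_ hk]]] | [q_pr hq]]; split=> //.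
  have := hk x; have := hk y; rewrite !inE !eqxx orbT.
  move=> /(_ isT) [?|ey] /(_ isT) [?|ex]; try by [apply: Or31 | apply: Or32].
  by apply: Or33; rewrite ex ey.
have [k k_gt0 hk] :
    exists2 k, 0 < k & (x = k %[mod q] \/ q %| x) /\ (y = k %[mod q] \/ q %| y).
  case: hq => [dx|dy|exy]; [exists y|exists x|exists x] => //; try tauto.
  by split; left.
by exists k; split=> // z; rewrite !inE => /orP[] /eqP->; tauto.
Qed.

Lemma in_VP p x : in_V p x <-> exists a b, 0 < b /\ x = 2 ^ a * p ^ b.
Proof.
split=> [[n [b [_ [b_gt0 ->]]]] | [a [b [b_gt0 ->]]]]; first by exists (n - 1), b.
by exists a.+1, b; rewrite subn1.
Qed.

Lemma in_V_smooth p x : prime p -> in_V p x -> [/\ 0 < x, p %| x & two_p_smooth p x].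
Proof.
move=> p_pr /in_VP [a [b [b_gt0 ex]]].
have x_gt0 : 0 < x by rewrite ex muln_gt0 !expn_gt0 (prime_gt0 p_pr).
split=> //; last by apply/two_p_smoothP => //; exists a, b.
by rewrite ex dvdn_mull // -{1}(expn1 p) dvdn_exp2l.
Qed.

Lemma in_V_mul p g u : in_V p g -> two_p_number p u -> in_V p (g * u).
Proof.
move=> /in_VP [i [m [m_gt0 ->]]] [a [b ->]]; apply/in_VP.
by exists (i + a), (m + b); rewrite addn_gt0 m_gt0 mulnACA -!expnD.
Qed.

Lemma in_Ep_lt p x y : prime p -> x < y ->
  in_Ep p x y <-> [/\ in_V p x, in_V p y & two_p_smooth p (y - x)].
Proof.
move=> p_pr lt_xy; split=> [[_ [Vx [Vy hA]]] | [Vx Vy sm]].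
  have [[x_gt0 _ _] [y_gt0 _ _]] := (in_V_smooth p_pr Vx, in_V_smooth p_pr Vy).
  split=> // q q_pr dq; apply/hA/in_A_E_pair => //; split=> //; apply: Or33.
  by apply/eqP; rewrite eq_sym eqn_mod_dvd // ltnW.
have [[x_gt0 px smx] [y_gt0 py smy]] := (in_V_smooth p_pr Vx, in_V_smooth p_pr Vy).
split; first by move=> exy; rewrite exy ltnn in lt_xy.
do 2!split=> //; move=> q; rewrite in_A_E_pair //.
split=> [[q_pr [dx|dy|exy]] | [->|->]].
- exact: smx q q_pr dx.
- exact: smy q q_pr dy.
- by apply: (sm q q_pr); rewrite -eqn_mod_dvd 1?ltnW // eq_sym; apply/eqP.
- split=> //; rewrite !dvdn2 !modn2.
  by case: (odd x) (odd y) => [] []; by [apply: Or31 | apply: Or32 | apply: Or33].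
- by split=> //; apply: Or31.
Qed.

(* The coprime {2,p}-numbers u < w whose difference is again a {2,p}-number: they come
   from 1 + 1 = 2, 1 + 2^s = p, 1 + p = 2^s and 1 + 8 = 9. *)
Definition primitive_pair p u w : Prop :=
  [\/ u = 1 /\ w = 2,
      exists s, p = 2 ^ s + 1 /\ (u = 1 \/ u = 2 ^ s) /\ w = p,
      exists s, p = 2 ^ s - 1 /\ (u = 1 \/ u = p) /\ w = 2 ^ s
    | p = 3 /\ (u = 1 \/ u = 8) /\ w = 9].

Section PrimitivePairs.

Variable p : nat.
Hypothesis p_pr : prime p.
Hypothesis p_odd : odd p.

Lemma smooth_sub_succ u w : coprime u w -> 2 %| u * w -> p %| u * w -> u < w ->
  two_p_smooth p (w - u) -> w = u.+1.
Proof.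
move=> co_uw dv2 dvp lt_uw sm.
have [/pdivP [q q_pr dq] | ] := ltnP 1 (w - u); last by lia.
have : q %| gcdn u w.
  have : q %| u * w by case: (sm q q_pr dq) => ->.
  rewrite dvdn_gcd Euclid_dvdM // => /orP[du | dw].
    by rewrite du -(dvdn_subl (ltnW lt_uw) du).
  by rewrite dw -(dvdn_subr (ltnW lt_uw) dw) dq.
by rewrite (eqP co_uw) dvdn1 => /eqP q1; rewrite q1 in q_pr.
Qed.

Lemma primitive_pairs_pow_add1 b c : p ^ b + 1 = 2 ^ c ->
  primitive_pair p 1 (2 ^ c) /\ primitive_pair p (p ^ b) (2 ^ c).
Proof.
move=> e; have := expn_add1_eq_pow2 (prime_gt1 p_pr) p_odd e.
case: b e => [|[|//]] e _.
  by rewrite -e expn0; split; apply: Or41.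
by rewrite expn1 in e *; split; apply: Or43; exists c; split; rewrite -?e ?addnK; tauto.
Qed.

Lemma primitive_pairs_pow2_add1 a d : 2 ^ a + 1 = p ^ d ->
  primitive_pair p 1 (p ^ d) /\ primitive_pair p (2 ^ a) (p ^ d).
Proof.
move=> e; case: (expn_eq_pow2_add1 (prime_gt1 p_pr) p_odd (esym e)) => [d1 | [p3 d2]].
  by rewrite d1 expn1 in e *; split; apply: Or42; exists a; split; rewrite -?e; tauto.
by rewrite p3 d2 in e *; split; apply: Or44; split=> //; split=> //; [left | right; lia].
Qed.

Lemma primitive_pair_one s t : 1 < 2 ^ s * p ^ t -> two_p_smooth p (2 ^ s * p ^ t - 1) ->
  primitive_pair p 1 (2 ^ s * p ^ t).
Proof.
move=> K_gt1 sm; have r_gt0 : 0 < 2 ^ s * p ^ t - 1 by rewrite subn_gt0.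
have [e [f ef]] := (two_p_smoothP p_pr r_gt0).1 sm.
have eK : 2 ^ s * p ^ t = 2 ^ e * p ^ f + 1 by rewrite -ef subnK // ltnW.
(* K - 1 is a {2,p}-number coprime to K: a power of p if K = 2^s, of 2 if K = p^t. *)
case: s t K_gt1 sm eK {r_gt0 ef} => [|s] [|t] //= K_gt1 sm eK.
- case: f eK => [|f] eK; rewrite ?expn0 ?muln1 ?mul1n in eK *.
    exact: (primitive_pairs_pow2_add1 (esym eK)).1.
  have : p %| 2 ^ e * p ^ f.+1 + 1 by rewrite -eK expnS dvdn_mulr.
  rewrite dvdn_addr; last by rewrite expnS mulnCA dvdn_mulr.
  by rewrite dvdn1 => /eqP p1; move: p_pr; rewrite p1.
- case: e eK => [|e] eK; rewrite ?expn0 ?muln1 ?mul1n in eK *.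
    exact: (primitive_pairs_pow_add1 (esym eK)).1.
  by have := congr1 odd eK; rewrite addn1 /= !oddM !oddX.
- have dvd2 : 2 %| 2 ^ s.+1 * p ^ t.+1 by rewrite expnS -mulnA dvdn_mulr.
  have dvdp : p %| 2 ^ s.+1 * p ^ t.+1 by rewrite (expnS p) mulnCA dvdn_mulr.
  have := smooth_sub_succ (coprime1n _) _ _ K_gt1 sm; rewrite !mul1n => /(_ dvd2 dvdp) K2.
  by move: dvdp (odd_prime_gt2 p_odd p_pr); rewrite K2 => /dvdn_leq; lia.
Qed.

Lemma primitive_pair_of_smooth a b c d : a * c = 0 -> b * d = 0 ->
  2 ^ a * p ^ b < 2 ^ c * p ^ d -> two_p_smooth p (2 ^ c * p ^ d - 2 ^ a * p ^ b) ->
  primitive_pair p (2 ^ a * p ^ b) (2 ^ c * p ^ d).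
Proof.
move=> /eqP + /eqP; rewrite !muln_eq0.
have co k l : coprime (p ^ k) (2 ^ l) by rewrite coprimeXl // coprimeXr // coprimen2.
have p_gt0 := prime_gt0 p_pr.
case: a b => [|a] [|b] /= ac bd lt sm.
- by move: lt sm; rewrite !expn0 muln1; apply: primitive_pair_one.
- move: lt sm; rewrite (eqP bd) expn0 mul1n muln1; case: c {ac} => [|c] lt sm.
    by rewrite expn0 ltnNge expn_gt0 p_gt0 in lt.
  have dvd2 : 2 %| p ^ b.+1 * 2 ^ c.+1 by rewrite (expnS 2) mulnCA dvdn_mulr.
  have dvdp : p %| p ^ b.+1 * 2 ^ c.+1 by rewrite (expnS p) -mulnA dvdn_mulr.
  have e := smooth_sub_succ (co _ _) dvd2 dvdp lt sm.
  by apply: (@primitive_pairs_pow_add1 b.+1 c.+1 _).2; rewrite addn1 e.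
- move: lt sm; rewrite (eqP ac) expn0 mul1n muln1; case: d {bd} => [|d] lt sm.
    by rewrite expn0 ltnNge expn_gt0 in lt.
  have dvd2 : 2 %| 2 ^ a.+1 * p ^ d.+1 by rewrite (expnS 2) -mulnA dvdn_mulr.
  have dvdp : p %| 2 ^ a.+1 * p ^ d.+1 by rewrite (expnS p) mulnCA dvdn_mulr.
  have co' : coprime (2 ^ a.+1) (p ^ d.+1) by rewrite coprime_sym.
  have e := smooth_sub_succ co' dvd2 dvdp lt sm.
  by apply: (@primitive_pairs_pow2_add1 a.+1 d.+1 _).2; rewrite addn1 e.
- by move: lt; rewrite (eqP ac) (eqP bd) !expn0 ltnNge muln_gt0 !expn_gt0 p_gt0.
Qed.

End PrimitivePairs.

Lemma primitive_pair_spec p u w : prime p -> primitive_pair p u w ->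
  [/\ u < w, two_p_number p u, two_p_number p w & two_p_number p (w - u)].
Proof.
move=> p_pr; have p_gt1 := prime_gt1 p_pr.
have one : two_p_number p 1 by exists 0, 0.
have pow2 s : two_p_number p (2 ^ s) by exists s, 0; rewrite muln1.
have pw : two_p_number p p by exists 0, 1; rewrite mul1n expn1.
case=> [[-> ->] | [s [ep [[->|->] ->]]] | [s [ep [[->|->] ->]]] | [p3 [[->|->] ->]]].
- by split; rewrite // -(expn1 2).
- by split; rewrite // (_ : p - 1 = 2 ^ s) // ep addnK.
- split=> //; first by rewrite ep addn1.
  by rewrite (_ : p - 2 ^ s = 1) // ep addKn.
- split=> //; first lia.
  by rewrite (_ : 2 ^ s - 1 = p) // ep.
- split=> //; first lia.
  by rewrite (_ : 2 ^ s - p = 1) //; lia.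
- by split=> //; [exists 0, 2; rewrite p3 | exact: (pow2 3)].
- by split=> //; [exact: (pow2 3) | exists 0, 2; rewrite p3].
Qed.

Lemma same2_swap_xy x y u v : same2 x y u v -> same2 y x u v.
Proof. by rewrite /same2; tauto. Qed.

Lemma same2_swap_uv x y u v : same2 x y u v -> same2 x y v u.
Proof. by rewrite /same2; tauto. Qed.

Lemma same2_eq x y u v u' v' : same2 x y u v -> u = u' -> v = v' -> same2 x y u' v'.
Proof. by move=> E <- <-. Qed.

Lemma in_Ep_sym p x y : in_Ep p x y <-> in_Ep p y x.
Proof.
suff {x y} swap x y : in_Ep p x y -> in_Ep p y x by split; apply: swap.
move=> [/nesym neq [Vx [Vy hA]]]; do 3!split=> //.
have mem_swap z : (z \in [:: y; x]) = (z \in [:: x; y]) by rewrite !inE orbC.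
move=> q; rewrite -hA; split=> -[q_pr [k [k_gt0 hk]]]; split=> //; exists k; split=> // z.
  by rewrite -mem_swap; apply: hk.
by rewrite mem_swap; apply: hk.
Qed.

Theorem in_Ep_iff p x y : prime p -> odd p ->
  in_Ep p x y <-> exists g u w, [/\ in_V p g, primitive_pair p u w & same2 x y (g * u) (g * w)].
Proof.
move=> p_pr p_odd.
wlog le_xy : x y / x <= y.
  move=> IH; case: (leqP x y) => [/IH // | /ltnW/IH]; rewrite in_Ep_sym => ->.
  by split=> -[g [u [w [Vg pr /same2_swap_xy E]]]]; exists g, u, w.
split=> [Exy | [g [u [w [Vg pr E]]]]].
- have lt_xy : x < y by rewrite ltn_neqAle le_xy andbT; apply/eqP; case: Exy.
  case/(in_Ep_lt p_pr lt_xy): Exy => /in_VP [i [m [m_gt0 ex]]] /in_VP [j [n [n_gt0 ey]]] sm.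
  set k := minn i j; set l := minn m n; set g := 2 ^ k * p ^ l.
  have g_gt0 : 0 < g by rewrite muln_gt0 !expn_gt0 (prime_gt0 p_pr).
  have split_exp e f : k <= e -> l <= f -> 2 ^ e * p ^ f = g * (2 ^ (e - k) * p ^ (f - l)).
    by move=> ke lf; rewrite mulnACA -!expnD !subnKC.
  rewrite split_exp ?geq_minl ?geq_minr // in ex; rewrite split_exp ?geq_minr ?geq_minl // in ey.
  exists g, (2 ^ (i - k) * p ^ (m - l)), (2 ^ (j - k) * p ^ (n - l)).
  split; [|apply: (primitive_pair_of_smooth p_pr p_odd)|by left].
  + by apply/in_VP; exists k, l; rewrite leq_min m_gt0 n_gt0.
  + lia.
  + lia.
  + by rewrite -(ltn_pmul2l g_gt0) -ex -ey.
  + by move=> q q_pr dq; apply: (sm q q_pr); rewrite ex ey -mulnBr dvdn_mull.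
- have [lt_uw nu nw nd] := primitive_pair_spec p_pr pr.
  have [g_gt0 _ _] := in_V_smooth p_pr Vg.
  have ng : two_p_number p g by case/in_VP: Vg => i [m [_ ->]]; exists i, m.
  have lt_g : g * u < g * w by rewrite ltn_pmul2l.
  case: E => [[-> ->] | [ex ey]]; last by move: le_xy; rewrite ex ey leqNgt lt_g.
  apply/(in_Ep_lt p_pr lt_g); split; try exact: in_V_mul.
  have gap_gt0 : 0 < g * (w - u) by rewrite muln_gt0 g_gt0 subn_gt0.
  by rewrite -mulnBr; apply/(two_p_smoothP p_pr gap_gt0)/two_p_numberM.
Qed.

Lemma exists_pos2_iff (P Q : nat -> nat -> Prop) :
  (forall a b, 0 < a -> 0 < b -> P a b <-> Q a b) ->
  (exists a b, 0 < a /\ 0 < b /\ P a b) <-> (exists a b, 0 < a /\ 0 < b /\ Q a b).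
Proof. by move=> PQ; split=> -[a [b [a0 [b0 /PQ]]]]; exists a, b; auto. Qed.

Lemma in_Ep_scaled p x y : prime p -> odd p ->
  in_Ep p x y <-> exists a b, 0 < a /\ 0 < b /\
    exists u w, primitive_pair p u w /\
      same2 x y (2 ^ (a - 1) * p ^ b * u) (2 ^ (a - 1) * p ^ b * w).
Proof.
move=> p_pr p_odd; rewrite in_Ep_iff //; split.
  by case=> g [u [w [[a [b [a0 [b0 ->]]]] pr E]]]; exists a, b; do 2!split=> //; exists u, w.
case=> a [b [a0 [b0 [u [w [pr E]]]]]].
by exists (2 ^ (a - 1) * p ^ b), u, w; split=> //; exists a, b.
Qed.

Ltac exp_arith := rewrite ?subn1 ?addnS ?addn0 /= ?expnS ?expnD; lia.

Lemma primitive_pair_three u w : primitive_pair 3 u w <->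
  u = 1 /\ w = 3 \/ u = 1 /\ w = 9 \/ u = 1 /\ w = 2 \/ u = 1 /\ w = 4 \/
  u = 3 /\ w = 4 \/ u = 2 /\ w = 3 \/ u = 8 /\ w = 9.
Proof.
split.
- case=> [[-> ->]|[s [es [[->|->] ->]]]|[s [es [[->|->] ->]]]|[_ [[->|->] ->]]]; try tauto.
  + by rewrite (_ : 2 ^ s = 2); [tauto | lia].
  + by rewrite (_ : 2 ^ s = 4); [tauto | lia].
  + by rewrite (_ : 2 ^ s = 4); [tauto | lia].
- case=> [[-> ->]|[[-> ->]|[[-> ->]|[[-> ->]|[[-> ->]|[[-> ->]|[-> ->]]]]]]];
    by [apply: Or41 | apply: Or44; split=> //; tauto
       | apply: Or42; exists 1; split=> //; tauto | apply: Or43; exists 2; split=> //; tauto].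
Qed.

Lemma in_Ep_three x y : in_Ep 3 x y <->
     exists a b : nat, 0 < a /\ 0 < b /\
       (same2 x y (2 ^ (a - 1) * 3 ^ b) (2 ^ (a - 1) * 3 ^ (b + 1)) \/
           same2 x y (2 ^ (a - 1) * 3 ^ b) (2 ^ (a - 1) * 3 ^ (b + 2)) \/
           same2 x y (2 ^ (a - 1) * 3 ^ b) (2 ^ a * 3 ^ b) \/
           same2 x y (2 ^ (a - 1) * 3 ^ b) (2 ^ (a + 1) * 3 ^ b) \/
           same2 x y (2 ^ (a - 1) * 3 ^ (b + 1)) (2 ^ (a + 1) * 3 ^ b) \/
           same2 x y (2 ^ a * 3 ^ b) (2 ^ (a - 1) * 3 ^ (b + 1)) \/
           same2 x y (2 ^ (a + 2) * 3 ^ b) (2 ^ (a - 1) * 3 ^ (b + 2))).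
Proof.
rewrite in_Ep_scaled //; apply: exists_pos2_iff => -[//|a] b _ _; split.
- case=> u [w [/primitive_pair_three pr E]].
  case: pr E => [[-> ->]|[[-> ->]|[[-> ->]|[[-> ->]|[[-> ->]|[[-> ->]|[-> ->]]]]]]] E;
    [left | right; left | do 2!right; left | do 3!right; left | do 4!right; left
    | do 5!right; left | do 6!right]; by apply: (same2_eq E); exp_arith.
- case=> [E|[E|[E|[E|[E|[E|E]]]]]];
    [exists 1, 3 | exists 1, 9 | exists 1, 2 | exists 1, 4
    | exists 3, 4 | exists 2, 3 | exists 8, 9];
    by rewrite primitive_pair_three; split; [tauto | apply: (same2_eq E); exp_arith].
Qed.

Lemma primitive_pair_fermat p m : p = 2 ^ m + 1 -> 3 < p -> forall u w,
  primitive_pair p u w <-> u = 1 /\ w = p \/ u = 1 /\ w = 2 \/ u = 2 ^ m /\ w = p.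
Proof.
move=> ep p_gt3 u w; split=> [|[[-> ->]|[[-> ->]|[-> ->]]]].
- case=> [[-> ->]|[s [es [[->|->] ->]]]|[s [es _]]|[p3 _]]; try tauto.
  + have -> : s = m by apply: (@expnI 2) => //; lia.
    tauto.
  + by move: p_gt3; rewrite (fermat_mersenne_eq3 ep es).
  + by move: p_gt3; rewrite p3.
- by apply: Or42; exists m; tauto.
- exact: Or41.
- by apply: Or42; exists m; tauto.
Qed.

Lemma in_Ep_fermat p m : prime p -> p = 2 ^ m + 1 -> 3 < p ->
   forall x y : nat, in_Ep p x y <->
     exists a b : nat, 0 < a /\ 0 < b /\
       (same2 x y (2 ^ (a - 1) * p ^ b) (2 ^ (a - 1) * p ^ (b + 1)) \/
           same2 x y (2 ^ (a - 1) * p ^ b) (2 ^ a * p ^ b) \/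
           same2 x y (2 ^ (m + a - 1) * p ^ b) (2 ^ (a - 1) * p ^ (b + 1))).
Proof.
move=> p_pr ep p_gt3 x y; have char := primitive_pair_fermat ep p_gt3.
have p_odd : odd p by case: (even_prime p_pr) p_gt3 => [->|].
rewrite in_Ep_scaled //; apply: exists_pos2_iff => -[//|a] b _ _; split.
- case=> u [w [/char [[-> ->]|[[-> ->]|[-> ->]]] E]]; [left | right; left | right; right];
    by apply: (same2_eq E); exp_arith.
- case=> [E|[E|E]]; [exists 1, p | exists 1, 2 | exists (2 ^ m), p];
    by rewrite char; split; [tauto | apply: (same2_eq E); exp_arith].
Qed.

Lemma primitive_pair_mersenne p m : p = 2 ^ m - 1 -> 3 < p -> forall u w,
  primitive_pair p u w <-> u = 1 /\ w = 2 \/ u = 1 /\ w = 2 ^ m \/ u = p /\ w = 2 ^ m.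
Proof.
move=> ep p_gt3 u w; split=> [|[[-> ->]|[[-> ->]|[-> ->]]]].
- case=> [[-> ->]|[s [es _]]|[s [es [[->|->] ->]]]|[p3 _]]; try tauto.
  + by move: p_gt3; rewrite (fermat_mersenne_eq3 es ep).
  + have -> : s = m by apply: (@expnI 2) => //; move: (expn_gt0 2 s) (expn_gt0 2 m); lia.
    tauto.
  + have -> : s = m by apply: (@expnI 2) => //; move: (expn_gt0 2 s) (expn_gt0 2 m); lia.
    tauto.
  + by move: p_gt3; rewrite p3.
- exact: Or41.
- by apply: Or43; exists m; tauto.
- by apply: Or43; exists m; tauto.
Qed.

Lemma in_Ep_mersenne p m : prime p -> p = 2 ^ m - 1 -> 3 < p ->
   forall x y : nat, in_Ep p x y <->
     exists a b : nat, 0 < a /\ 0 < b /\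
       (same2 x y (2 ^ (a - 1) * p ^ b) (2 ^ a * p ^ b) \/
           same2 x y (2 ^ (a - 1) * p ^ b) (2 ^ (m + a - 1) * p ^ b) \/
           same2 x y (2 ^ (a - 1) * p ^ (b + 1)) (2 ^ (m + a - 1) * p ^ b)).
Proof.
move=> p_pr ep p_gt3 x y; have char := primitive_pair_mersenne ep p_gt3.
have p_odd : odd p by case: (even_prime p_pr) p_gt3 => [->|].
rewrite in_Ep_scaled //; apply: exists_pos2_iff => -[//|a] b _ _; split.
- case=> u [w [/char [[-> ->]|[[-> ->]|[-> ->]]] E]]; [left | right; left | right; right];
    by apply: (same2_eq E); exp_arith.
- case=> [E|[E|E]]; [exists 1, 2 | exists 1, (2 ^ m) | exists p, (2 ^ m)];
    by rewrite char; split; [tauto | apply: (same2_eq E); exp_arith].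
Qed.

Lemma primitive_pair_generic p : prime p -> odd p -> ~ fermat_prime p -> ~ mersenne_prime p ->
  forall u w, primitive_pair p u w <-> u = 1 /\ w = 2.
Proof.
move=> p_pr p_odd not_F not_M u w; split=> [|[-> ->]]; last exact: Or41.
case=> [//|[[|s] [ep _]]|[[|s] [ep _]]|[p3 _]].
- by move: p_odd; rewrite ep.
- by case: not_F; split=> //; exists s.+1.
- by move: p_pr; rewrite ep.
- by case: not_M; split=> //; exists s.+1.
- by case: not_F; split=> //; exists 1; rewrite p3.
Qed.

Lemma in_Ep_generic p : prime p -> odd p -> ~ fermat_prime p -> ~ mersenne_prime p ->
   forall x y : nat, in_Ep p x y <->
     exists a b : nat, 0 < a /\ 0 < b /\
       same2 x y (2 ^ a * p ^ b) (2 ^ (a - 1) * p ^ b).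
Proof.
move=> p_pr p_odd not_F not_M x y; have char := primitive_pair_generic p_pr p_odd not_F not_M.
rewrite in_Ep_scaled //; apply: exists_pos2_iff => -[//|a] b _ _; split.
- by case=> u [w [/char [-> ->] E]]; apply: (same2_eq (same2_swap_uv E)); exp_arith.
- move=> E; exists 1, 2; rewrite char; split=> //.
  by apply: (same2_eq (same2_swap_uv E)); exp_arith.
Qed.

Theorem lemma3p18 :
  (* (1) p = 3 *)
  (forall x y : nat, in_Ep 3 x y <->
     exists a b : nat, 0 < a /\ 0 < b /\
       (same2 x y (2 ^ (a - 1) * 3 ^ b) (2 ^ (a - 1) * 3 ^ (b + 1)) \/
           same2 x y (2 ^ (a - 1) * 3 ^ b) (2 ^ (a - 1) * 3 ^ (b + 2)) \/
           same2 x y (2 ^ (a - 1) * 3 ^ b) (2 ^ a * 3 ^ b) \/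
           same2 x y (2 ^ (a - 1) * 3 ^ b) (2 ^ (a + 1) * 3 ^ b) \/
           same2 x y (2 ^ (a - 1) * 3 ^ (b + 1)) (2 ^ (a + 1) * 3 ^ b) \/
           same2 x y (2 ^ a * 3 ^ b) (2 ^ (a - 1) * 3 ^ (b + 1)) \/
           same2 x y (2 ^ (a + 2) * 3 ^ b) (2 ^ (a - 1) * 3 ^ (b + 2)))) /\
  (* (2) p = 2^m + 1 > 3 a Fermat prime *)
  (forall p m : nat, prime p -> p = 2 ^ m + 1 -> 3 < p ->
   forall x y : nat, in_Ep p x y <->
     exists a b : nat, 0 < a /\ 0 < b /\
       (same2 x y (2 ^ (a - 1) * p ^ b) (2 ^ (a - 1) * p ^ (b + 1)) \/
           same2 x y (2 ^ (a - 1) * p ^ b) (2 ^ a * p ^ b) \/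
           same2 x y (2 ^ (m + a - 1) * p ^ b) (2 ^ (a - 1) * p ^ (b + 1)))) /\
  (* (3) p = 2^m - 1 > 3 a Mersenne prime *)
  (forall p m : nat, prime p -> p = 2 ^ m - 1 -> 3 < p ->
   forall x y : nat, in_Ep p x y <->
     exists a b : nat, 0 < a /\ 0 < b /\
       (same2 x y (2 ^ (a - 1) * p ^ b) (2 ^ a * p ^ b) \/
           same2 x y (2 ^ (a - 1) * p ^ b) (2 ^ (m + a - 1) * p ^ b) \/
           same2 x y (2 ^ (a - 1) * p ^ (b + 1)) (2 ^ (m + a - 1) * p ^ b))) /\
  (* (4) p odd prime, neither Fermat nor Mersenne *)
  (forall p : nat, prime p -> odd p -> ~ fermat_prime p -> ~ mersenne_prime p ->
   forall x y : nat, in_Ep p x y <->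
     exists a b : nat, 0 < a /\ 0 < b /\
       same2 x y (2 ^ a * p ^ b) (2 ^ (a - 1) * p ^ b)).
Proof.
split; first exact: in_Ep_three.
split; first exact: in_Ep_fermat.
split; first exact: in_Ep_mersenne.
exact: in_Ep_generic.
Qed.
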